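(* If $n$ is a non-negative integer, then $$\sum_{k = 1}^n \sum_{j = 0}^{k - 1} \frac{\binom{n}{j}^2}{k - j} = \binom{2n}{n} \left(2H_n - H_{2n} \right)$$ and $$\sum_{k = 1}^n \sum_{j = 0}^{k - 1} \frac{1}{k - j}\binom{n}{j}\binom{2n}{n + j} = \binom{3n}{n} H_n - \sum_{k = 1}^n \frac{1}{k}\binom{3n - k}{n - k}.$$
   Context: $H_n=\sum_{m=1}^n\frac1m$. Empty sums are zero. *)

From mathcomp Require Import all_boot all_algebra.
Set Implicit Arguments. Unset Strict Implicit. Unset Printing Implicit Defensive.
Import GRing.Theory Num.Theory.
Local Open Scope ring_scope.

Definition harmonic (n : nat) : rat := \sum_(1 <= m < n.+1) (m%:R)^-1.

From mathcomp Require Import all_boot all_algebra.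
From mathcomp Require Import zify ring.
Import GRing.Theory Num.Theory.
Local Open Scope ring_scope.

(* Summing over k first turns both double sums into Σ_{j ≤ n} w_j H_{n-j}
   with w_j = C(n,j) C(b,n-j), for b = n and b = 2n.  Writing
   H_{n-j} = H_n - (H_n - H_{n-j}), Vandermonde's convolution gives
   C(n+b,n) H_n, and the correction term is the convolution of C(b,.) with
   C(n,j) (H_n - H_{n-j}), the derivative in x of C(x,j) at x = n.
   Differentiating Vandermonde's identity, it equals the derivative of
   C(x,n) at x = n+b, i.e. C(n+b,n) (H_{n+b} - H_b).  For b = 2n this is
   also Σ_k C(3n-k,n-k)/k, because both expressions satisfy Pascal's
   recurrence with the same boundary values. *)

Lemma harmonic0 : harmonic 0 = 0.
Proof. by rewrite /harmonic big_geq. Qed.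

Lemma harmonicS m : harmonic m.+1 = harmonic m + m.+1%:R^-1.
Proof. by rewrite /harmonic big_nat_recr. Qed.

(* For k <= x, the derivative at X = x of the polynomial C(X, k). *)
Definition dbin (x k : nat) : rat :=
  'C(x, k)%:R * (harmonic x - harmonic (x - k)).

Lemma dbin0 x : dbin x 0 = 0.
Proof. by rewrite /dbin subn0 subrr mulr0. Qed.

Lemma dbin_pascal x k : (k < x)%N -> dbin x.+1 k.+1 = dbin x k.+1 + dbin x k.
Proof.
move=> ltkx; have [e Exk] : exists e, (x - k = e.+1)%N by exists (x - k).-1; lia.
rewrite /dbin subSS subnS Exk /= !harmonicS binS natrD.
set a := 'C(x, k.+1)%:R; set b := 'C(x, k)%:R.
have e1_neq0 : e.+1%:R != 0 :> rat by rewrite pnatr_eq0.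
have x1_neq0 : x.+1%:R != 0 :> rat by rewrite pnatr_eq0.
have bin_ratio : (a + b) / x.+1%:R = a / e.+1%:R.
  have := mul_bin_down x.+1 k.+1; rewrite /= subSS Exk.
  move=> /(congr1 (GRing.natmul (1 : rat))); rewrite !natrM binS natrD -/a -/b.
  by move=> bin_down; apply/eqP; rewrite eqr_div // mulrC -bin_down mulrC.
apply/subr0_eq; transitivity ((a + b) / x.+1%:R - a / e.+1%:R); first by ring.
by rewrite bin_ratio subrr.
Qed.

Lemma sum_mul_binS (R : pzSemiRingType) (F : nat -> R) b n :
  \sum_(j < n.+2) F j * 'C(b.+1, n.+1 - j)%:R
  = \sum_(j < n.+2) F j * 'C(b, n.+1 - j)%:R
    + \sum_(j < n.+1) F j * 'C(b, n - j)%:R.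
Proof.
rewrite [LHS]big_ord_recr [in RHS]big_ord_recr /= subnn !bin0 addrAC.
congr (_ + _); rewrite -big_split; apply: eq_bigr => j _ /=.
by rewrite subSn 1?binS ?natrD ?mulrDr // -ltnS.
Qed.

Lemma dbin_Vandermonde a b n : (n <= a)%N ->
  \sum_(j < n.+1) dbin a j * 'C(b, n - j)%:R = dbin (a + b) n.
Proof.
elim: b n => [|b IHb] [|n] lena.
- by rewrite big_ord1 !dbin0 mul0r.
- rewrite big_ord_recr /= subnn bin0 mulr1 addn0 big1 ?add0r // => j _.
  by rewrite bin0n subn_eq0 leqNgt ltn_ord mulr0.
- by rewrite big_ord1 !dbin0 mul0r.
- by rewrite sum_mul_binS !IHb ?(ltnW lena) // addnS dbin_pascal // ltn_addr.
Qed.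

Definition harmonic_bin_sum (x n : nat) : rat :=
  \sum_(1 <= k < n.+1) k%:R^-1 * 'C(x - k, n - k)%:R.

Lemma harmonic_bin_sum0 x : harmonic_bin_sum x 0 = 0.
Proof. by rewrite /harmonic_bin_sum big_geq. Qed.

Lemma harmonic_bin_sum_pascal x n : (n < x)%N ->
  harmonic_bin_sum x.+1 n.+1 = harmonic_bin_sum x n.+1 + harmonic_bin_sum x n.
Proof.
move=> ltnx; rewrite /harmonic_bin_sum big_nat_recr // [in RHS]big_nat_recr //=.
rewrite subnn !bin0 addrAC; congr (_ + _); rewrite -big_split.
apply: eq_big_nat => k /andP[_ ltkn] /=.
by rewrite !subSn 1?binS ?natrD ?mulrDr // ltnW // (leq_trans ltkn).
Qed.

Lemma harmonic_bin_sum_dbin x n : (n <= x)%N -> harmonic_bin_sum x n = dbin x n.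
Proof.
move=> lenx; rewrite -(subnKC lenx); move: (x - n)%N => d {x lenx}.
elim: d n => [|d IHd] n.
  rewrite addn0 /harmonic_bin_sum /dbin subnn harmonic0 subr0 binn mul1r.
  by apply: eq_big_nat => k _; rewrite binn mulr1.
elim: n => [|n IHn]; first by rewrite harmonic_bin_sum0 dbin0.
rewrite addnS harmonic_bin_sum_pascal ?ltn_addr // IHd addSnnS IHn.
by rewrite -dbin_pascal // addnS ltnS leq_addr.
Qed.

Lemma sum_div_harmonic (f : nat -> rat) N :
  \sum_(1 <= k < N.+1) \sum_(0 <= j < k) f j / (k - j)%:R
  = \sum_(0 <= j < N.+1) f j * harmonic (N - j).
Proof.
elim: N => [|N IHN]; first by rewrite big_geq // big_nat1 harmonic0 mulr0.
rewrite big_nat_recr // IHN [in RHS]big_nat_recr //= subnn harmonic0 mulr0 addr0.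
rewrite -big_split; apply: eq_big_nat => j /andP[_ ltjN] /=.
by rewrite subSn // harmonicS mulrDr.
Qed.

Lemma harmonic_Vandermonde n b :
  \sum_(0 <= j < n.+1) 'C(n, j)%:R * 'C(b, n - j)%:R * harmonic (n - j)
  = 'C(n + b, n)%:R * harmonic n - dbin (n + b) n.
Proof.
have split_harmonic (j : 'I_n.+1) :
    'C(n, j)%:R * harmonic (n - j) = 'C(n, j)%:R * harmonic n - dbin n j.
  by rewrite /dbin; ring.
rewrite big_mkord -dbin_Vandermonde // -binomial.Vandermonde natr_sum mulr_suml.
by rewrite -sumrB; apply: eq_bigr => j _; rewrite natrM mulrAC split_harmonic; ring.
Qed.

Theorem proposition17 (n : nat) :
  (\sum_(1 <= k < n.+1) \sum_(0 <= j < k)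
      ('C(n, j) ^ 2)%:R / (k - j)%:R
    = ('C(2 * n, n))%:R * (2%:R * harmonic n - harmonic (2 * n)) :> rat)
  /\
  (\sum_(1 <= k < n.+1) \sum_(0 <= j < k)
      ((k - j)%:R)^-1 * ('C(n, j))%:R * ('C(2 * n, n + j))%:R
    = ('C(3 * n, n))%:R * harmonic n
      - \sum_(1 <= k < n.+1) (k%:R)^-1 * ('C(3 * n - k, n - k))%:R :> rat).
Proof.
split.
  rewrite sum_div_harmonic.
  under eq_big_nat => j /andP[_ lejn]
    do rewrite -mulnn natrM -{2}(bin_sub (lejn : (j <= n)%N)).
  by rewrite harmonic_Vandermonde /dbin addnK mul2n -addnn; ring.
have bin_2n_sym j : (j <= n)%N -> 'C(2 * n, n + j) = 'C(2 * n, n - j).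
  by move=> lejn; rewrite -bin_sub; [congr 'C(_, _) | ]; lia.
under eq_bigr => k _ do under eq_bigr => j _ do rewrite -mulrA mulrC.
rewrite sum_div_harmonic.
under eq_big_nat => j /andP[_ lejn] do rewrite bin_2n_sym //.
by rewrite harmonic_Vandermonde -mulSn -harmonic_bin_sum_dbin // leq_pmull.
Qed.
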